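(* Work in homotopy type theory with univalence and function extensionality. For any $f : A \to B$ there are maps (1) $\mathsf{adj}\, f \to \mathsf{ish2adj}\, f$ and (2) $\mathsf{adj}\, f \to \mathsf{ish2adjl}\, f$, where \[ \mathsf{adj}\, f :\equiv \sum_{g : B \to A} \ \sum_{\eta : gf \sim \mathsf{id}_A} \ \sum_{\varepsilon : fg \sim \mathsf{id}_B} \big(f[\eta] \sim \varepsilon_f\big) \times \big(\eta_g \sim g[\varepsilon]\big), \] \[ \mathsf{ish2adj}\, f :\equiv \sum_{g, \eta, \varepsilon} \ \sum_{\tau : f[\eta] \sim \varepsilon_{f}} \ \sum_{\theta : \eta_{g} \sim g[\varepsilon]} \big(\mathsf{Coh}\, \eta \cdot g \llbracket \tau \rrbracket \sim \theta_f\big), \qquad \mathsf{ish2adjl}\, f :\equiv \sum_{g, \eta, \varepsilon} \ \sum_{\tau : f[\eta] \sim \varepsilon_{f}} \ \sum_{\theta : \eta_{g} \sim g[\varepsilon]} \big(\tau_{g} \cdot \mathsf{Coh}\, \varepsilon \sim f \llbracket \theta \rrbracket\big), \] with $g : B \to A$, $\eta : gf \sim \mathsf{id}_A$, $\varepsilon : fg \sim \mathsf{id}_B$.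
   Context: Notation: for $h : X \to Y$ and a path $p$, $h[p]$ denotes $\mathsf{ap}_h(p)$; for 2-paths $\alpha : p = q$, $h\llbracket \alpha \rrbracket : h[p] = h[q]$ is the action on 2-paths. A homotopy $H : F \sim G$ is an element of $\prod_x Fx = Gx$; $H_k := \lambda c.\, H_{kc}$, $h[H] := \lambda x.\, h[H_x]$, $h\llbracket \alpha\rrbracket := \lambda x.\, h\llbracket \alpha_x\rrbracket$ for $\alpha : H \sim H'$; $\cdot$ is pointwise concatenation in diagrammatic order. For maps $u : X \to Y$, $v : Y \to X$ and $H : vu \sim \mathsf{id}_X$, $\mathsf{Coh}\, H : H_{vu} \sim v[u[H]]$ is defined pointwise: $(\mathsf{Coh}\, H)_x$ is the concatenation of the path $H_{v(ux)} = (vu)[H_x]$ given by naturality of $H$ (applied to $H_x$, cancelling $H_x$) with the functoriality path $(vu)[H_x] = v[u[H_x]]$. $\mathsf{Coh}\,\eta$ uses $(u,v,H)=(f,g,\eta)$ and $\mathsf{Coh}\,\varepsilon$ uses $(u,v,H)=(g,f,\varepsilon)$. *)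

Set Implicit Arguments.

Inductive paths {A : Type} (a : A) : A -> Type := idpath : paths a a.
Arguments idpath {A a}.

Definition concat {A : Type} {x y z : A} (p : paths x y) (q : paths y z) : paths x z :=
  match q in paths _ z return paths x z with idpath => p end.

Definition inv {A : Type} {x y : A} (p : paths x y) : paths y x :=
  match p in paths _ y return paths y x with idpath => idpath end.

Definition ap {X Y : Type} (h : X -> Y) {x y : X} (p : paths x y) : paths (h x) (h y) :=
  match p in paths _ y return paths (h x) (h y) with idpath => idpath end.

Definition ap2 {X Y : Type} (h : X -> Y) {x y : X} {p q : paths x y}
  (alpha : paths p q) : paths (ap h p) (ap h q) := ap (ap h) alpha.

Definition homotopy {X : Type} {P : X -> Type} (F G : forall x, P x) : Type :=
  forall x, paths (F x) (G x).

Definition concat_1p {A : Type} {x y : A} (p : paths x y) : paths (concat idpath p) p :=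
  match p in paths _ y return paths (concat idpath p) p with idpath => idpath end.

Definition htpy_natural {X : Type} {F : X -> X} (H : forall x, paths (F x) x)
  {a b : X} (p : paths a b) : paths (concat (ap F p) (H b)) (concat (H a) p) :=
  match p in paths _ b return paths (concat (ap F p) (H b)) (concat (H a) p) with
  | idpath => concat_1p (H a) end.

Definition cancelR {A : Type} {x y z : A} (p q : paths x y) (r : paths y z)
  (e : paths (concat p r) (concat q r)) : paths p q :=
  match r as r0 in paths _ z0
        return paths (concat p r0) (concat q r0) -> paths p q with
  | idpath => fun e0 => e0 end e.

Definition ap_compose {X Y Z : Type} (u : X -> Y) (v : Y -> Z) {x y : X} (p : paths x y) :
  paths (ap (fun t => v (u t)) p) (ap v (ap u p)) :=
  match p in paths _ y return paths (ap (fun t => v (u t)) p) (ap v (ap u p)) with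
  | idpath => idpath end.

Definition Coh {X Y : Type} {u : X -> Y} {v : Y -> X}
  (H : forall x, paths (v (u x)) x) :
  forall x, paths (H (v (u x))) (ap v (ap u (H x))) :=
  fun x => concat
    (inv (cancelR (ap (fun t => v (u t)) (H x)) (H (v (u x))) (H x)
                  (htpy_natural H (H x))))
    (ap_compose u v (H x)).

Definition adj {A B : Type} (f : A -> B) : Type :=
  { g : B -> A &
  { eta : forall a, paths (g (f a)) a &
  { eps : forall b, paths (f (g b)) b &
    ((forall a, paths (ap f (eta a)) (eps (f a))) *
     (forall b, paths (eta (g b)) (ap g (eps b))))%type } } }.

Definition ish2adj {A B : Type} (f : A -> B) : Type :=
  { g : B -> A &
  { eta : forall a, paths (g (f a)) a &
  { eps : forall b, paths (f (g b)) b &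
  { tau : forall a, paths (ap f (eta a)) (eps (f a)) &
  { theta : forall b, paths (eta (g b)) (ap g (eps b)) &
    forall a, paths (concat (Coh (u := f) (v := g) eta a) (ap2 g (tau a)))
                    (theta (f a)) } } } } }.

Definition ish2adjl {A B : Type} (f : A -> B) : Type :=
  { g : B -> A &
  { eta : forall a, paths (g (f a)) a &
  { eps : forall b, paths (f (g b)) b &
  { tau : forall a, paths (ap f (eta a)) (eps (f a)) &
  { theta : forall b, paths (eta (g b)) (ap g (eps b)) &
    forall b, paths (concat (tau (g b)) (Coh (u := g) (v := f) eps b))
                    (ap2 f (theta b)) } } } } }.

Definition happly {X : Type} {P : X -> Type} {h k : forall x, P x}
  (e : paths h k) : forall x, paths (h x) (k x) :=
  match e in paths _ k return forall x, paths (h x) (k x) with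
  | idpath => fun x => idpath end.

Definition IsEquiv {X Y : Type} (m : X -> Y) : Type :=
  ({ s : Y -> X & forall y, paths (m (s y)) y } *
   { r : Y -> X & forall x, paths (r (m x)) x })%type.

Definition Funext : Type :=
  forall (X : Type) (P : X -> Type) (h k : forall x, P x), IsEquiv (@happly X P h k).


(* A family of 2-cells over [B] is determined by its values on the image of [f]:
   transport them along [ε].  When [f[η a] = ε (f a)], transporting along [ε (f a)]
   is transporting along [f[η a]], which returns the original value at [f a].
   Taking [Coh η a · g⟦τ a⟧] as the value at [f a] yields a [θ] satisfying the
   coherence of [ish2adj]; dually, [f⟦θ b⟧ · (Coh ε b)⁻¹] as the value at [g b]
   yields a [τ] for [ish2adjl]. *)

Definition transport {X : Type} (P : X -> Type) {x y : X} (p : paths x y) (u : P x) : P y :=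
  match p in paths _ y return P y with idpath => u end.

Definition transport2 {X : Type} (P : X -> Type) {x y : X} {p q : paths x y}
  (e : paths p q) (u : P x) : paths (transport P p u) (transport P q u) :=
  match e in paths _ q return paths (transport P p u) (transport P q u) with
  | idpath => idpath end.

Definition apD_ap {X Y : Type} (h : X -> Y) (P : Y -> Type) (s : forall x, P (h x))
  {x x' : X} (p : paths x x') : paths (transport P (ap h p) (s x)) (s x') :=
  match p in paths _ x' return paths (transport P (ap h p) (s x)) (s x') with
  | idpath => idpath end.

Definition moveR_pM {X : Type} {x y z : X} (p : paths z y) (q : paths x y) (r : paths x z)
  (e : paths r (concat q (inv p))) : paths (concat r p) q :=
  concat (ap (fun t => concat t p) e)
    (match p as p0 in paths _ y0 return forall q0 : paths x y0,
       paths (concat (concat q0 (inv p0)) p0) q0 with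
     | idpath => fun q0 => idpath end q).

Section ExtendAlong.

Variables (X Y : Type) (h : X -> Y) (k : Y -> X).
Variable eps : forall y, paths (h (k y)) y.
Variables (P : Y -> Type) (s : forall x, P (h x)).

Definition extend_along (y : Y) : P y := transport P (eps y) (s (k y)).

Lemma extend_along_beta (x : X) (p : paths (k (h x)) x)
  (triangle : paths (ap h p) (eps (h x))) : paths (extend_along (h x)) (s x).
Proof.
  exact (concat (transport2 P (inv triangle) (s (k (h x)))) (apD_ap h P s p)).
Qed.

End ExtendAlong.

Arguments extend_along {X Y h k} eps P s y.
Arguments extend_along_beta {X Y h k} eps P s x p triangle.

Section AdjToIsh2adj.

Variables (A B : Type) (f : A -> B).

Lemma adj_to_ish2adj : adj f -> ish2adj f.
Proof.
  intros [g [eta [eps [tau _]]]].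
  pose (P := fun b => paths (eta (g b)) (ap g (eps b))).
  pose (s := fun a => concat (Coh (u := f) (v := g) eta a) (ap2 g (tau a)) : P (f a)).
  exists g, eta, eps, tau, (extend_along eps P s).
  intro a.
  exact (inv (extend_along_beta eps P s a (eta a) (tau a))).
Qed.

Lemma adj_to_ish2adjl : adj f -> ish2adjl f.
Proof.
  intros [g [eta [eps [_ theta]]]].
  pose (Q := fun a => paths (ap f (eta a)) (eps (f a))).
  pose (r := fun b =>
    concat (ap2 f (theta b)) (inv (Coh (u := g) (v := f) eps b)) : Q (g b)).
  exists g, eta, eps, (extend_along eta Q r), theta.
  intro b.
  apply moveR_pM.
  exact (extend_along_beta eta Q r b (eps b) (inv (theta b))).
Qed.

End AdjToIsh2adj.

Theorem corollary3p10 (funext : Funext) (A B : Type) (f : A -> B) :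
  ((adj f -> ish2adj f) * (adj f -> ish2adjl f))%type.
Proof.
  exact (@adj_to_ish2adj A B f, @adj_to_ish2adjl A B f).
Qed.
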